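(* Let $(\mathbf M,\tau)$ be a state BL-algebra satisfying: (a) if $\tau$ is faithful, then $\tau(\mathbf M)$ is a subdirectly irreducible BL-algebra; (b) $\mathrm{Ker}(\tau)$ is either the trivial hoop $\{1\}$ or a subdirectly irreducible hoop; (c) $\mathrm{Ker}(\tau)$ and $\tau(M)$ have the disjunction property, i.e. for all $x\in\mathrm{Ker}(\tau)$ and $y\in\tau(M)$, $x\vee y=1$ implies $x=1$ or $y=1$. Then $(\mathbf M,\tau)$ is subdirectly irreducible.
   Context: A BL-algebra is an algebra $\mathbf M=(M;\wedge,\vee,\odot,\to,0,1)$ of type $\langle 2,2,2,2,0,0\rangle$ such that $(M;\wedge,\vee,0,1)$ is a bounded lattice, $(M;\odot,1)$ is a commutative monoid, and for all $a,b,c$: $c\le a\to b$ iff $a\odot c\le b$; $a\wedge b=a\odot(a\to b)$; $(a\to b)\vee(b\to a)=1$. A filter is a nonempty subset closed under $\odot$ and upward closed. A state-operator on $\mathbf M$ is a map $\tau:M\to M$ such that for all $x,y$: $\tau(0)=0$; $\tau(x\to y)=\tau(x)\to\tau(x\wedge y)$; $\tau(x\odot y)=\tau(x)\odot\tau(x\to(x\odot y))$; $\tau(\tau(x)\odot\tau(y))=\tau(x)\odot\tau(y)$; $\tau(\tau(x)\to\tau(y))=\tau(x)\to\tau(y)$; $(\mathbf M,\tau)$ is a state BL-algebra (algebra with extra unary operation $\tau$). Its congruences correspond to $\tau$-filters (filters $F$ with $\tau(F)\subseteq F$), so it is subdirectly irreducible iff it has a least $\tau$-filter different from $\{1\}$.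 $\mathrm{Ker}(\tau)=\{a:\tau(a)=1\}$; $\tau$ is faithful if $\mathrm{Ker}(\tau)=\{1\}$. $\tau(M)$ is a subalgebra (BL-algebra $\tau(\mathbf M)$). $\mathrm{Ker}(\tau)$ is a hoop under $\odot,\to,1$; its filters are nonempty subsets closed under $\odot$ and upward closed in $\mathrm{Ker}(\tau)$, and it is subdirectly irreducible if it has a least filter different from $\{1\}$. *)

Record BLalgebra := {
  car :> Type;
  bmeet : car -> car -> car;
  bjoin : car -> car -> car;
  bmul  : car -> car -> car;
  bimp  : car -> car -> car;
  bzero : car;
  bone  : car;
  meetC : forall x y, bmeet x y = bmeet y x;
  joinC : forall x y, bjoin x y = bjoin y x;
  meetA : forall x y z, bmeet x (bmeet y z) = bmeet (bmeet x y) z;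
  joinA : forall x y z, bjoin x (bjoin y z) = bjoin (bjoin x y) z;
  meetJ : forall x y, bmeet x (bjoin x y) = x;
  joinM : forall x y, bjoin x (bmeet x y) = x;
  meet0 : forall x, bmeet bzero x = bzero;
  meet1 : forall x, bmeet bone x = x;
  mulA : forall x y z, bmul x (bmul y z) = bmul (bmul x y) z;
  mulC : forall x y, bmul x y = bmul y x;
  mul1 : forall x, bmul x bone = x;
  (* residuation, divisibility, prelinearity; x <= y means x /\ y = x *)
  resid : forall a b c, bmeet c (bimp a b) = c <-> bmeet (bmul a c) b = bmul a c;
  divis : forall a b, bmeet a b = bmul a (bimp a b);
  prelin : forall a b, bjoin (bimp a b) (bimp b a) = bone
}.

Arguments bmeet {_}. Arguments bjoin {_}. Arguments bmul {_}.
Arguments bimp {_}. Arguments bzero {_}. Arguments bone {_}.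

Definition ble {M : BLalgebra} (x y : M) : Prop := bmeet x y = x.

Definition state_operator (M : BLalgebra) (tau : M -> M) : Prop :=
  tau bzero = bzero /\
  (forall x y, tau (bimp x y) = bimp (tau x) (tau (bmeet x y))) /\
  (forall x y, tau (bmul x y) = bmul (tau x) (tau (bimp x (bmul x y)))) /\
  (forall x y, tau (bmul (tau x) (tau y)) = bmul (tau x) (tau y)) /\
  (forall x y, tau (bimp (tau x) (tau y)) = bimp (tau x) (tau y)).

Definition is_filter (M : BLalgebra) (F : M -> Prop) : Prop :=
  (exists x, F x) /\
  (forall x y, F x -> F y -> F (bmul x y)) /\
  (forall x y, F x -> ble x y -> F y).

Definition tau_filter (M : BLalgebra) (tau : M -> M) (F : M -> Prop) : Prop :=
  is_filter M F /\ (forall x, F x -> F (tau x)).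

Definition nontrivial_set (M : BLalgebra) (F : M -> Prop) : Prop :=
  ~ (forall x, F x <-> x = bone).

(* (M, tau) subdirectly irreducible: least tau-filter different from {1} *)
Definition state_SI (M : BLalgebra) (tau : M -> M) : Prop :=
  exists F, tau_filter M tau F /\ nontrivial_set M F /\
    forall G, tau_filter M tau G -> nontrivial_set M G ->
      forall x, F x -> G x.

(* filters of a substructure S (subalgebra tau(M), or the hoop Ker tau):
   nonempty subsets of S closed under product and upward closed in S *)
Definition is_subfilter (M : BLalgebra) (S F : M -> Prop) : Prop :=
  (forall x, F x -> S x) /\
  (exists x, F x) /\
  (forall x y, F x -> F y -> F (bmul x y)) /\
  (forall x y, F x -> S y -> ble x y -> F y).

Definition sub_SI (M : BLalgebra) (S : M -> Prop) : Prop :=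
  exists F, is_subfilter M S F /\ nontrivial_set M F /\
    forall G, is_subfilter M S G -> nontrivial_set M G ->
      forall x, F x -> G x.

Definition Ker (M : BLalgebra) (tau : M -> M) (a : M) : Prop := tau a = bone.

Definition image (M : BLalgebra) (tau : M -> M) (y : M) : Prop :=
  exists x, y = tau x.

Definition faithful (M : BLalgebra) (tau : M -> M) : Prop :=
  forall a, Ker M tau a -> a = bone.

(* Every nontrivial tau-filter G meets the relevant substructure nontrivially,
   so G contains its monolith.  If tau is faithful, any a <> 1 in G gives
   tau a <> 1 in G /\ tau(M), and the upward closure of the monolith of tau(M)
   is the least nontrivial tau-filter.  Otherwise the monolith of Ker(tau) is
   itself a tau-filter; for a <> 1 in G either tau a = 1, or, picking k <> 1 in
   that monolith, k \/ tau a lies in G /\ Ker(tau) and differs from 1 by the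
   disjunction property. *)

From Stdlib Require Import Classical.

Section BLOrder.

Variable M : BLalgebra.
Implicit Types x y z u v : M.

Lemma meetxx x : bmeet x x = x.
Proof.
  transitivity (bmeet x (bjoin x (bmeet x x))).
  - rewrite (joinM M); reflexivity.
  - apply (meetJ M).
Qed.

Lemma ble_refl x : ble x x.
Proof. apply meetxx. Qed.

Lemma ble_trans x y z : ble x y -> ble y z -> ble x z.
Proof. unfold ble; intros Hxy Hyz. rewrite <- Hxy, <- (meetA M), Hyz. reflexivity. Qed.

Lemma ble_top x : ble x bone.
Proof. unfold ble. rewrite (meetC M). apply (meet1 M). Qed.

Lemma top_ble x : ble bone x -> x = bone.
Proof. unfold ble. rewrite (meet1 M). trivial. Qed.

Lemma ble_joinl x y : ble x (bjoin x y).
Proof. apply (meetJ M). Qed.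

Lemma ble_joinr x y : ble y (bjoin x y).
Proof. rewrite (joinC M). apply ble_joinl. Qed.

Lemma ble_imp x y z : ble (bmul x z) y -> ble z (bimp x y).
Proof. apply (resid M). Qed.

Lemma impxx x : bimp x x = bone.
Proof. apply top_ble, ble_imp. rewrite (mul1 M). apply ble_refl. Qed.

Lemma ble_mull x y : ble (bmul x y) x.
Proof. apply (resid M). rewrite impxx. apply ble_top. Qed.

Lemma ble_imp_mul x y : ble y (bimp x (bmul x y)).
Proof. apply ble_imp, ble_refl. Qed.

Lemma ble_mul2l x y z : ble x y -> ble (bmul z x) (bmul z y).
Proof.
  intro Hxy. apply (resid M), ble_trans with y; trivial.
  apply ble_imp. rewrite (mulC M). apply ble_refl.
Qed.

Lemma ble_mul2 x y u v : ble x y -> ble u v -> ble (bmul x u) (bmul y v).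
Proof.
  intros Hxy Huv. apply ble_trans with (bmul x v).
  - apply ble_mul2l; trivial.
  - rewrite (mulC M x v), (mulC M y v). apply ble_mul2l; trivial.
Qed.

Lemma divisE x y : ble x y -> x = bmul y (bimp y x).
Proof. intro Hxy. rewrite <- (divis M), (meetC M). symmetry. exact Hxy. Qed.

End BLOrder.

Section StateOperator.

Variables (M : BLalgebra) (tau : M -> M).
Hypothesis Hst : state_operator M tau.

Lemma state_one : tau bone = bone.
Proof.
  destruct Hst as [H0 [Himp _]].
  specialize (Himp bzero bzero). rewrite (meet0 M), H0, !impxx in Himp. exact Himp.
Qed.

Lemma state_idem x : tau (tau x) = tau x.
Proof.
  destruct Hst as [_ [_ [_ [Hmul _]]]].
  specialize (Hmul x bone). rewrite state_one, !(mul1 M) in Hmul. exact Hmul.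
Qed.

Lemma state_mono x y : ble x y -> ble (tau x) (tau y).
Proof.
  destruct Hst as [_ [_ [Hmul _]]].
  intro Hxy. rewrite (divisE M x y Hxy), Hmul. apply ble_mull.
Qed.

Lemma image_one : image M tau bone.
Proof. exists bone. symmetry. apply state_one. Qed.

Lemma image_mul x y : image M tau x -> image M tau y -> image M tau (bmul x y).
Proof.
  destruct Hst as [_ [_ [_ [Hmul _]]]].
  intros [x' ->] [y' ->]. exists (bmul (tau x') (tau y')). symmetry. apply Hmul.
Qed.

Lemma Ker_one : Ker M tau bone.
Proof. apply state_one. Qed.

Lemma Ker_up x y : Ker M tau x -> ble x y -> Ker M tau y.
Proof. unfold Ker. intros Hx Hxy. apply top_ble. rewrite <- Hx. apply state_mono, Hxy. Qed.

Lemma Ker_mul x y : Ker M tau x -> Ker M tau y -> Ker M tau (bmul x y).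
Proof.
  destruct Hst as [_ [_ [Hmul _]]].
  unfold Ker. intros Hx Hy. rewrite Hmul, Hx, (Ker_up y); [apply (mul1 M) | exact Hy |].
  apply ble_imp_mul.
Qed.

End StateOperator.

Section Filters.

Variable M : BLalgebra.
Implicit Types (F G S : M -> Prop) (a : M).

Definition up_closure (F : M -> Prop) (x : M) : Prop := exists g, F g /\ ble g x.

Lemma filter_one F : is_filter M F -> F bone.
Proof. intros [[x Fx] [_ Fup]]. apply (Fup x); [exact Fx | apply ble_top]. Qed.

Lemma subfilter_one S F : S bone -> is_subfilter M S F -> F bone.
Proof. intros S1 [_ [[x Fx] [_ Fup]]]. apply (Fup x); [exact Fx | exact S1 | apply ble_top]. Qed.

Lemma nontrivial_witness F : F bone -> nontrivial_set M F -> exists a, F a /\ a <> bone.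
Proof.
  intros F1 Fnt. apply NNPP. intro Hno. apply Fnt. intro x. split.
  - intro Fx. apply NNPP. intro Hx. apply Hno. exists x; split; assumption.
  - intros ->. exact F1.
Qed.

Lemma witness_nontrivial F a : F a -> a <> bone -> nontrivial_set M F.
Proof. intros Fa Ha Htriv. apply Ha, Htriv, Fa. Qed.

Lemma filter_meet_subfilter S G :
  S bone -> (forall x y, S x -> S y -> S (bmul x y)) -> is_filter M G ->
  is_subfilter M S (fun x => G x /\ S x).
Proof.
  intros S1 Smul HG. pose proof (filter_one G HG) as G1. destruct HG as [_ [Gmul Gup]].
  split; [|split; [|split]].
  - intros x [_ Sx]. exact Sx.
  - exists bone. split; assumption.
  - intros x y [Gx Sx] [Gy Sy]. split; auto.
  - intros x y [Gx _] Sy Hxy. split; [apply (Gup x) |]; assumption.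
Qed.

Lemma monolith_below S F G a :
  S bone -> (forall x y, S x -> S y -> S (bmul x y)) ->
  (forall G', is_subfilter M S G' -> nontrivial_set M G' -> forall x, F x -> G' x) ->
  is_filter M G -> G a -> S a -> a <> bone -> forall x, F x -> G x.
Proof.
  intros S1 Smul Fleast HG Ga Sa Ha x Fx.
  apply (Fleast (fun y => G y /\ S y)); [| | exact Fx].
  - apply filter_meet_subfilter; assumption.
  - apply witness_nontrivial with a; [split |]; assumption.
Qed.

End Filters.

Arguments up_closure {M}.

Section SubdirectlyIrreducible.

Variables (M : BLalgebra) (tau : M -> M).
Hypothesis Hst : state_operator M tau.

Lemma up_closure_tau_filter F :
  is_subfilter M (image M tau) F -> tau_filter M tau (up_closure F).
Proof.
  intros [Fim [[f Ff] [Fmul _]]]. split; [split; [|split] |].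
  - exists f, f. split; [exact Ff | apply ble_refl].
  - intros x y [g [Fg Hgx]] [h [Fh Hhy]].
    exists (bmul g h). split; [apply Fmul | apply ble_mul2]; assumption.
  - intros x y [g [Fg Hgx]] Hxy. exists g. split; [| apply ble_trans with x]; assumption.
  - intros x [g [Fg Hgx]]. exists g. split; [exact Fg |].
    destruct (Fim g Fg) as [z ->]. rewrite <- (state_idem M tau Hst z).
    apply (state_mono M tau Hst), Hgx.
Qed.

Lemma state_SI_of_faithful :
  faithful M tau -> sub_SI M (image M tau) -> state_SI M tau.
Proof.
  intros Hf [F [HF [Fnt Fleast]]].
  pose proof (subfilter_one M _ F (image_one M tau Hst) HF) as F1.
  destruct (nontrivial_witness M F F1 Fnt) as [f [Ff Hf1]].
  exists (up_closure F). split; [| split].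
  - apply up_closure_tau_filter, HF.
  - apply witness_nontrivial with f; [exists f; split; [| apply ble_refl] |]; assumption.
  - intros G [HG Gtau] Gnt x [g [Fg Hgx]].
    destruct (nontrivial_witness M G (filter_one M G HG) Gnt) as [a [Ga Ha]].
    pose proof HG as [_ [_ Gup]].
    apply (Gup g); [| exact Hgx].
    apply (monolith_below M (image M tau) F G (tau a)); try assumption.
    + apply image_one, Hst.
    + apply image_mul, Hst.
    + apply Gtau, Ga.
    + exists a; reflexivity.
    + intro Hta. apply Ha, Hf, Hta.
Qed.

Lemma Ker_subfilter_tau_filter F :
  is_subfilter M (Ker M tau) F -> tau_filter M tau F.
Proof.
  intros HF. pose proof (subfilter_one M _ F (Ker_one M tau Hst) HF) as F1.
  destruct HF as [FK [Fne [Fmul Fup]]].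
  split; [split; [|split] |].
  - exact Fne.
  - exact Fmul.
  - intros x y Fx Hxy. apply (Fup x); [exact Fx | | exact Hxy].
    apply (Ker_up M tau Hst x); [apply FK |]; assumption.
  - intros x Fx. rewrite (FK x Fx). exact F1.
Qed.

Lemma state_SI_of_Ker_SI :
  (forall x y, Ker M tau x -> image M tau y -> bjoin x y = bone -> x = bone \/ y = bone) ->
  sub_SI M (Ker M tau) -> state_SI M tau.
Proof.
  intros Hdisj [K [HK [Knt Kleast]]].
  pose proof (subfilter_one M _ K (Ker_one M tau Hst) HK) as K1.
  destruct (nontrivial_witness M K K1 Knt) as [k [Kk Hk]].
  exists K. split; [apply Ker_subfilter_tau_filter, HK | split; [exact Knt |]].
  intros G [HG Gtau] Gnt.
  destruct (nontrivial_witness M G (filter_one M G HG) Gnt) as [a [Ga Ha]].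
  pose proof HG as [_ [_ Gup]].
  assert (HkK : Ker M tau k) by (destruct HK as [KK _]; apply KK, Kk).
  assert (Hb : exists b, G b /\ Ker M tau b /\ b <> bone).
  { destruct (classic (tau a = bone)) as [Hta | Hta].
    - exists a. split; [| split]; assumption.
    - exists (bjoin k (tau a)). split; [| split].
      + apply (Gup (tau a)); [apply Gtau, Ga | apply ble_joinr].
      + apply (Ker_up M tau Hst k); [exact HkK | apply ble_joinl].
      + intro Hj. destruct (Hdisj k (tau a) HkK (ex_intro _ a eq_refl) Hj); contradiction. }
  destruct Hb as [b [Gb [Kb Hb]]].
  apply (monolith_below M (Ker M tau) K G b); try assumption.
  - apply Ker_one, Hst.
  - apply Ker_mul, Hst.
Qed.

End SubdirectlyIrreducible.

Theorem theorem2p3 (M : BLalgebra) (tau : M -> M)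
  (Hst : state_operator M tau)
  (Ha : faithful M tau -> sub_SI M (image M tau))
  (Hb : (forall a, Ker M tau a <-> a = bone) \/ sub_SI M (Ker M tau))
  (Hc : forall x y, Ker M tau x -> image M tau y ->
          bjoin x y = bone -> x = bone \/ y = bone) :
  state_SI M tau.
Proof.
  destruct Hb as [Htriv | HK].
  - assert (Hf : faithful M tau) by (intros a Hka; apply Htriv, Hka).
    apply state_SI_of_faithful; auto.
  - apply state_SI_of_Ker_SI; assumption.
Qed.
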